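(* For each $n\ge1$ there is a bijection $\psi'$ from the set of plane trees with $n$ edges to $\mathfrak S_n(132)$ such that, for every such tree $T$ and $\pi=\psi'(T)$: (1) the number of young leaves of $T$ equals the number of double ascents of $\pi(n+1)=(\pi_1,\dots,\pi_n,n+1)$; (2) the number of old leaves of $T$ equals the number of ascending runs of $\pi(n+1)$.
   Context: A plane tree is a rooted tree in which the children of each vertex are linearly ordered. A leaf is a vertex with no children; the one-vertex tree has no leaves. A leaf is old if it is the leftmost child of its parent, young otherwise. $\mathfrak S_n(132)$ is the set of permutations of $\{1,\dots,n\}$ with no indices $a<b<c$ such that $\pi_a<\pi_c<\pi_b$. For a sequence $\sigma$, a double ascent is an index $i$ with $\sigma_i<\sigma_{i+1}<\sigma_{i+2}$, and an ascending run is a maximal increasing sequence $\sigma_i<\sigma_{i+1}<\cdots<\sigma_{i+k}$ of consecutive entries with $k\ge1$. *)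

From mathcomp Require Import all_boot all_fingroup.
Set Implicit Arguments. Unset Strict Implicit. Unset Printing Implicit Defensive.

Inductive ptree : Type := Node of seq ptree.

Fixpoint edges (t : ptree) : nat :=
  let: Node ts := t in sumn (map (fun c => (edges c).+1) ts).

Definition is_leaf (t : ptree) : bool := if t is Node [::] then true else false.

Fixpoint old_leaves (t : ptree) : nat :=
  let: Node ts := t in
  (if ts is c :: _ then is_leaf c else false) + sumn (map old_leaves ts).

Fixpoint young_leaves (t : ptree) : nat :=
  let: Node ts := t in
  count is_leaf (behead ts) + sumn (map young_leaves ts).

Definition avoids132 n (p : {perm 'I_n}) : Prop :=
  ~ exists a b c : 'I_n, [/\ a < b, b < c, p a < p c & p c < p b].

Definition word_ext n (p : {perm 'I_n}) : seq nat :=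
  [seq (p i).+1 | i <- enum 'I_n] ++ [:: n.+1].

Definition double_ascents (s : seq nat) : nat :=
  count (fun i => (nth 0 s i < nth 0 s i.+1) && (nth 0 s i.+1 < nth 0 s i.+2))
        (iota 0 (size s - 2)).

(* ascending runs = maximal increasing factors of length >= 2; counted by
   their starting index i: s_i < s_{i+1} and (i = 0 or s_{i-1} >= s_i) *)
Definition ascending_runs (s : seq nat) : nat :=
  count (fun i => (nth 0 s i < nth 0 s i.+1) &&
                  ((i == 0) || (nth 0 s i.-1 >= nth 0 s i)))
        (iota 0 (size s - 1)).

From mathcomp Require Import all_boot all_fingroup.
From mathcomp Require Import zify.
Set Implicit Arguments. Unset Strict Implicit. Unset Printing Implicit Defensive.

(* A plane tree is either a single vertex or a tree [r] with one more subtree [c]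
   hung to the right of the root.  Dually, a 132-avoiding permutation of size
   [n > 0] factors around its maximum as [(a + |b|) n b]: every entry left of the
   maximum exceeds every entry right of it, and [a], [b] are again 132-avoiding.
   Sending [r] to [a] and [c] to [b] recursively gives the bijection.

   Both statistics only depend on the ascent bit-sequence of [pi(n+1)]: double
   ascents are adjacent pairs of [true]s and ascending runs are maximal blocks of
   [true]s.  If [c] is a leaf, the new maximum just appends one [true], which
   starts a new run when [r] is empty (an old leaf) and makes a new double ascent
   otherwise (a young leaf).  If [c] is not a leaf, the ascent sequences of [r]
   and [c] are concatenated with a separating [false], so both statistics add. *)

Fixpoint double_trues (l : seq bool) : nat :=
  match l with a :: ((b :: _) as r) => (a && b) + double_trues r | _ => 0 end.

(* [start] tells whether a run of [true]s may begin at the head of [l]. *)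
Fixpoint true_runs (start : bool) (l : seq bool) : nat :=
  if l is a :: r then (a && start) + true_runs (~~ a) r else 0.

Fixpoint ascents (s : seq nat) : seq bool :=
  match s with x :: ((y :: _) as r) => (x < y) :: ascents r | _ => [::] end.

Lemma double_trues_cat l1 l2 :
  double_trues (l1 ++ false :: l2) = double_trues l1 + double_trues l2.
Proof.
elim: l1 => [|a [|b l1] IH] /=; first by case: l2.
  by rewrite andbF.
by move: IH => /= ->; rewrite addnA.
Qed.

Lemma true_runs_cat start l1 l2 :
  true_runs start (l1 ++ false :: l2) = true_runs start l1 + true_runs true l2.
Proof. by elim: l1 start => [|a l1 IH] start //=; rewrite IH addnA. Qed.

Lemma double_trues_rcons l : double_trues (rcons l true) = double_trues l + last false l.
Proof.
elim: l => [|a [|b l] IH] //=; first by rewrite andbT addn0.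
by move: IH => /= ->; rewrite addnA.
Qed.

Lemma true_runs_rcons start l :
  true_runs start (rcons l true) = true_runs start l + ~~ last (~~ start) l.
Proof.
elim: l start => [|a l IH] start /=; first by case: start.
by rewrite IH negbK addnA.
Qed.

Lemma double_truesE l :
  double_trues l = count (fun i => nth false l i && nth false l i.+1) (iota 0 (size l).-1).
Proof.
elim: l => [|a [|b l] IH] //=.
by rewrite -add1n iotaDl count_map; move: IH => /= ->.
Qed.

Lemma true_runsE start l : true_runs start l =
  count (fun i => nth false l i && (if i is j.+1 then ~~ nth false l j else start))
        (iota 0 (size l)).
Proof.
elim: l start => [|a l IH] start //=.
rewrite -add1n iotaDl count_map IH; congr (_ + _).
by apply: eq_count => -[|i].
Qed.

Lemma size_ascents s : size (ascents s) = (size s).-1.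
Proof. by elim: s => [|x [|y s] IH] //=; rewrite IH. Qed.

Lemma nth_ascents s i :
  i < (size s).-1 -> nth false (ascents s) i = (nth 0 s i < nth 0 s i.+1).
Proof. by elim: s i => [|x [|y s] IH] [|i] //= /IH. Qed.

Lemma ascents_shift k s : ascents (map (addn^~ k) s) = ascents s.
Proof. by elim: s => [|x [|y s] IH] //=; move: IH => /= ->; rewrite ltn_add2r. Qed.

Lemma ascents_rcons s x y :
  ascents (rcons (rcons s x) y) = rcons (ascents (rcons s x)) (x < y).
Proof. by elim: s => [|a [|b s] IH] //=; move: IH => /= ->. Qed.

Lemma ascents_cat s x y t :
  ascents (rcons s x ++ y :: t) = ascents (rcons s x) ++ (x < y) :: ascents (y :: t).
Proof. by elim: s => [|a [|b s] IH] //=; move: IH => /= ->. Qed.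

Lemma ascents_rcons_above (s : seq nat) x y :
  {in s, forall z, z < x} -> {in s, forall z, z < y} ->
  ascents (rcons s x) = ascents (rcons s y).
Proof.
case/lastP: s => [|s z] // ltx lty; rewrite !ascents_rcons.
by rewrite ltx ?lty // mem_rcons mem_head.
Qed.

Lemma double_ascentsE s : double_ascents s = double_trues (ascents s).
Proof.
rewrite /double_ascents double_truesE size_ascents.
have -> : size s - 2 = (size s).-1.-1 by lia.
by apply: eq_in_count => i; rewrite mem_iota => lti; rewrite !nth_ascents //; lia.
Qed.

Lemma ascending_runsE s : ascending_runs s = true_runs true (ascents s).
Proof.
rewrite /ascending_runs true_runsE size_ascents.
have -> : size s - 1 = (size s).-1 by lia.
apply: eq_in_count => -[|i]; rewrite mem_iota => lti; rewrite nth_ascents //=.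
by rewrite nth_ascents -?leqNgt //; lia.
Qed.

Definition join132 (a b : seq nat) : seq nat :=
  map (addn^~ (size b)) a ++ (size a + size b) :: b.

Lemma size_join132 a b : size (join132 a b) = (size a + size b).+1.
Proof. by rewrite size_cat size_map addnS. Qed.

Fixpoint tree_word (t : ptree) : seq nat :=
  let: Node ts := t in foldl (fun w c => join132 w (tree_word c)) [::] ts.

Lemma tree_word_rcons r c :
  tree_word (Node (rcons r c)) = join132 (tree_word (Node r)) (tree_word c).
Proof. by rewrite /= foldl_rcons. Qed.

Lemma edges_rcons r c : edges (Node (rcons r c)) = edges (Node r) + (edges c).+1.
Proof. by rewrite /= map_rcons sumn_rcons. Qed.

Lemma young_leaves_rcons r c : young_leaves (Node (rcons r c)) =
  young_leaves (Node r) + young_leaves c + (is_leaf c && ~~ nilp r).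
Proof.
case: r => [|x r] /=; first by rewrite andbF !addn0.
rewrite map_rcons sumn_rcons -cats1 count_cat /= andbT addn0; lia.
Qed.

Lemma old_leaves_rcons r c : old_leaves (Node (rcons r c)) =
  old_leaves (Node r) + old_leaves c + (is_leaf c && nilp r).
Proof.
case: r => [|x r] /=; first by rewrite andbT !addn0 addnC.
rewrite map_rcons sumn_rcons andbF; lia.
Qed.

Lemma ptree_rcons_ind (P : ptree -> Prop) : P (Node [::]) ->
  (forall r c, P (Node r) -> P c -> P (Node (rcons r c))) -> forall t, P t.
Proof.
move=> P0 Prcons t; have [m] := ubnP (edges t); elim: m t => // m IH [ts].
case/lastP: ts => [|r c] // /[!edges_rcons] ltm.
by apply: Prcons; apply: IH; lia.
Qed.

(* Permutations are encoded 0-based: [pi] becomes the word [pi_1 - 1, ..., pi_m - 1]. *)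
Definition is_perm_word m (s : seq nat) := perm_eq s (iota 0 m).

Section PermWord.
Variables (m : nat) (s : seq nat).

Lemma is_perm_wordP : uniq s -> size s = m -> {in s, forall x, x < m} -> is_perm_word m s.
Proof.
move=> uniq_s size_s lt_s; apply: uniq_perm; rewrite ?iota_uniq //.
have sub_s : {subset s <= iota 0 m} by move=> x /lt_s; rewrite mem_iota.
by have [] := uniq_min_size uniq_s sub_s; rewrite ?size_iota ?size_s.
Qed.

Hypothesis s_perm : is_perm_word m s.

Lemma perm_word_uniq : uniq s.
Proof. by rewrite (perm_uniq s_perm) iota_uniq. Qed.

Lemma size_perm_word : size s = m.
Proof. by rewrite (perm_size s_perm) size_iota. Qed.

Lemma mem_perm_word x : (x \in s) = (x < m).
Proof. by rewrite (perm_mem s_perm) mem_iota. Qed.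

End PermWord.

Lemma perm_word_lt_size m (s : seq nat) : is_perm_word m s -> {in s, forall x, x < size s}.
Proof. by move=> s_perm x; rewrite (mem_perm_word s_perm) (size_perm_word s_perm). Qed.

Lemma is_perm_word_join p q a b : is_perm_word p a -> is_perm_word q b ->
  is_perm_word (p + q).+1 (join132 a b).
Proof.
move=> a_perm b_perm.
have [sa sb] := (size_perm_word a_perm, size_perm_word b_perm).
apply: is_perm_wordP; last first.
- move=> x; rewrite mem_cat inE sa sb => /or3P [/mapP [y] | /eqP -> | ].
  + by rewrite (mem_perm_word a_perm) => lty ->; lia.
  + lia.
  + by rewrite (mem_perm_word b_perm); lia.
- by rewrite size_join132 sa sb.
rewrite cat_uniq map_inj_uniq ?(perm_word_uniq a_perm) /=; last exact: addIn.
rewrite (perm_word_uniq b_perm) (mem_perm_word b_perm) sa sb andbT -leqNgt leq_addl.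
rewrite negb_or /= andbT; apply/andP; split.
  by apply/mapP => -[y]; rewrite (mem_perm_word a_perm); lia.
by apply/hasPn => x; rewrite (mem_perm_word b_perm) => ltx; apply/mapP => -[y] _; lia.
Qed.

Lemma is_perm_word_tree t : is_perm_word (edges t) (tree_word t).
Proof.
elim/ptree_rcons_ind: t => // r c IHr IHc.
by rewrite tree_word_rcons edges_rcons addnS; apply: is_perm_word_join.
Qed.

Lemma index_join132 (a b : seq nat) : {in a, forall x, x < size a} ->
  index (size a + size b) (join132 a b) = size a.
Proof.
move=> lt_a; rewrite index_cat size_map /= eqxx addn0.
by case: ifP => // /mapP [y /lt_a + /addIn eq_y]; rewrite eq_y ltnn.
Qed.

Lemma join132_inj (a b a' b' : seq nat) :
  {in a, forall x, x < size a} -> {in a', forall x, x < size a'} ->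
  join132 a b = join132 a' b' -> a = a' /\ b = b'.
Proof.
move=> lt_a lt_a' eq_join.
have eq_sum : size a + size b = size a' + size b'.
  by move/(congr1 size): eq_join; rewrite !size_cat !size_map /=; lia.
have eq_sa : size a = size a'.
  by rewrite -(index_join132 b lt_a) -(index_join132 b' lt_a') eq_join eq_sum.
have eq_sb : size b = size b' by lia.
move: eq_join; rewrite /join132 eq_sa eq_sb => eq_join; split.
  move/(congr1 (take (size a'))): eq_join; rewrite !take_size_cat ?size_map //.
  exact/inj_map/addIn.
by move/(congr1 (drop (size a').+1)): eq_join; rewrite -!cat_rcons !drop_size_cat
  // size_rcons size_map ?eq_sa.
Qed.

Lemma tree_word_inj : injective tree_word.
Proof.
have lt_tree t := perm_word_lt_size (is_perm_word_tree t).
have join_nil a b : join132 a b <> [::] by case: a.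
elim/ptree_rcons_ind => [|r c IHr IHc] [ts]; case/lastP: ts => [|r' c'] //;
  rewrite ?tree_word_rcons.
- by move=> /esym /join_nil.
- by move=> /join_nil.
- by case/join132_inj => // /IHr [->] /IHc ->.
Qed.

Definition avoids132_word (s : seq nat) := forall i j l, i < j -> j < l -> l < size s ->
  ~~ (nth 0 s i < nth 0 s l < nth 0 s j).

Lemma avoids132_word_take k s : avoids132_word s -> avoids132_word (take k s).
Proof.
move=> s_av i j l ltij ltjl; rewrite size_take_min => ltl.
by rewrite !nth_take; try lia; apply: s_av; lia.
Qed.

Lemma avoids132_word_drop k s : avoids132_word s -> avoids132_word (drop k s).
Proof.
move=> s_av i j l ltij ltjl; rewrite size_drop => ltl.
by rewrite !nth_drop; apply: s_av; lia.
Qed.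

Lemma avoids132_word_unshift k s : avoids132_word (map (addn^~ k) s) -> avoids132_word s.
Proof.
move=> s_av i j l ltij ltjl ltl; have := s_av i j l ltij ltjl.
by rewrite size_map !(nth_map 0) ?ltn_add2r //; [apply | lia..].
Qed.

Lemma avoids132_word_cat_max A m B x y : avoids132_word (A ++ m :: B) ->
  x \in A -> y \in B -> x < y -> m <= y.
Proof.
move=> s_av xA yB ltxy; rewrite leqNgt; apply/negP => ltym.
have ltxA : index x A < size A by rewrite index_mem.
have ltyB : index y B < size B by rewrite index_mem.
set l := size A + (index y B).+1.
have ltAl : size A < l by rewrite /l; lia.
have ltl : l < size (A ++ m :: B) by rewrite size_cat /= /l; lia.
have := s_av _ _ _ ltxA ltAl ltl; rewrite !nth_cat ltxA ltnn subnn ifN /l; last by lia.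
by rewrite addnC addnK /= !nth_index // ltxy ltym.
Qed.

Lemma perm_word_blocks m (A B : seq nat) :
  is_perm_word m (A ++ B) -> {in A & B, forall x y, y < x} ->
  is_perm_word (size B) B /\
  exists a, A = map (addn^~ (size B)) a /\ is_perm_word (size a) a.
Proof.
move=> AB_perm lt_BA.
have := perm_word_uniq AB_perm; rewrite cat_uniq => /and3P [uniq_A _ uniq_B].
have mem_AB z : (z \in A) || (z \in B) = (z < m).
  by rewrite -mem_cat (mem_perm_word AB_perm).
have size_AB : size A + size B = m by rewrite -size_cat (size_perm_word AB_perm).
have lt_B : {in B, forall y, y < size B}.
  move=> y yB; rewrite ltnNge; apply/negP => le_By.
  have ltym : y < m by rewrite -mem_AB yB orbT.
  suff sub : {subset iota 0 y.+1 <= B}.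
    by have := uniq_leq_size (iota_uniq 0 y.+1) sub; rewrite size_iota ltnNge le_By.
  move=> z; rewrite mem_iota /= => ltzy.
  have : z < m by lia.
  by rewrite -mem_AB => /orP [/lt_BA /(_ yB) | //]; lia.
have ge_A : {in A, forall x, size B <= x}.
  move=> x xA; have sub : {subset B <= iota 0 x} by move=> y yB; rewrite mem_iota lt_BA.
  by have := uniq_leq_size uniq_B sub; rewrite size_iota.
split; first exact: is_perm_wordP.
exists (map (subn^~ (size B)) A).
have eq_A : map (addn^~ (size B)) (map (subn^~ (size B)) A) = A.
  by rewrite -map_comp map_id_in // => x /ge_A /subnK.
split=> //; apply: is_perm_wordP; rewrite ?size_map //.
  by rewrite -(map_inj_uniq (@addIn (size B))) eq_A.
move=> z /mapP [x xA ->]; have := ge_A x xA.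
have : x < m by rewrite -mem_AB xA.
lia.
Qed.

Lemma avoids132_word_decomp k s : is_perm_word k.+1 s -> avoids132_word s ->
  exists a b, [/\ s = join132 a b, is_perm_word (size a) a, is_perm_word (size b) b,
                  avoids132_word a & avoids132_word b].
Proof.
move=> s_perm s_av; have k_s : k \in s by rewrite (mem_perm_word s_perm).
move: s_perm s_av; case/splitPr: k_s => A B s_perm s_av.
have AB_perm : is_perm_word k (A ++ B).
  rewrite /is_perm_word -(perm_cons k) -(perm_catCA A [:: k] B).
  by apply: perm_trans s_perm _; rewrite -addn1 iotaD perm_catC.
have lt_BA : {in A & B, forall x y, y < x}.
  move=> x y xA yB; have ltyk : y < k by rewrite -(mem_perm_word AB_perm) mem_cat yB orbT.
  case: ltngtP => // [ltxy | eq_xy].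
    by have := avoids132_word_cat_max s_av xA yB ltxy; lia.
  move: (perm_word_uniq AB_perm); rewrite cat_uniq => /and3P [_ /hasPn /(_ y yB)].
  by rewrite eq_xy xA.
have [B_perm [a [eq_A a_perm]]] := perm_word_blocks AB_perm lt_BA.
have size_aB : size a + size B = k.
  by rewrite -(size_perm_word AB_perm) size_cat eq_A size_map.
exists a, B; split=> //.
- by rewrite /join132 -eq_A size_aB.
- apply: (@avoids132_word_unshift (size B)).
  rewrite -eq_A -(take_size_cat (k :: B) (erefl (size A))).
  exact: avoids132_word_take.
- rewrite -(drop_size_cat B (erefl (size (rcons A k)))) cat_rcons.
  exact: avoids132_word_drop.
Qed.

Lemma tree_word_surj m s : is_perm_word m s -> avoids132_word s ->
  exists t, edges t = m /\ tree_word t = s.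
Proof.
elim/ltn_ind: m s => -[|k] IH s s_perm s_av.
  by exists (Node [::]); have := size_perm_word s_perm; case: s {s_perm s_av}.
have [a [b [eq_s a_perm b_perm a_av b_av]]] := avoids132_word_decomp s_perm s_av.
have := size_perm_word s_perm; rewrite eq_s size_join132 => -[size_ab].
have [[ts] [edges_a tree_a]] := IH (size a) ltac:(lia) a a_perm a_av.
have [tb [edges_b tree_b]] := IH (size b) ltac:(lia) b b_perm b_av.
exists (Node (rcons ts tb)).
by rewrite edges_rcons tree_word_rcons tree_a tree_b edges_a edges_b addnS size_ab.
Qed.

Lemma nth_join132 a b i : nth 0 (join132 a b) i =
  if i < size a then nth 0 a i + size b
  else if i == size a then size a + size b else nth 0 b (i - (size a).+1).
Proof.
rewrite nth_cat size_map; case: ltnP => [lt_ia | le_ai]; first by rewrite (nth_map 0).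
case: eqVneq => [-> | ne_ia]; first by rewrite subnn.
by have -> : i - size a = (i - (size a).+1).+1 by lia.
Qed.

Lemma avoids132_word_join (a b : seq nat) :
  {in a, forall x, x < size a} -> {in b, forall y, y < size b} ->
  avoids132_word a -> avoids132_word b -> avoids132_word (join132 a b).
Proof.
move=> lt_a lt_b a_av b_av i j l ltij ltjl; rewrite size_join132 => ltl.
have nth_a k : k < size a -> nth 0 a k < size a by move=> ?; apply/lt_a/mem_nth.
have nth_b k : k < size b -> nth 0 b k < size b by move=> ?; apply/lt_b/mem_nth.
rewrite !nth_join132.
have [lt_la | le_al] := ltnP l (size a).
  by rewrite !ifT ?ltn_add2r; try lia; apply: a_av.
have [lt_ai | le_ia] := ltnP (size a) i.
  by rewrite !ifF; try lia; apply: b_av; lia.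
(* Here [i <= size a <= l]: either [l] is the maximum, or [i] lies above [l]. *)
have [eq_la | ne_la] := eqVneq l (size a).
  have lt_ja : j < size a by lia.
  by have := nth_a j lt_ja; apply/contraL => /andP [_]; rewrite lt_ja; lia.
have := nth_b (l - (size a).+1) ltac:(lia).
by apply/contraL => /andP [+ _]; case: ifP => ?; [lia | case: ifP => ?; lia].
Qed.

Lemma avoids132_tree_word t : avoids132_word (tree_word t).
Proof.
elim/ptree_rcons_ind: t => [i j l _ _ // | r c IHr IHc].
rewrite tree_word_rcons.
by apply: avoids132_word_join => //; apply: perm_word_lt_size (is_perm_word_tree _).
Qed.

(* The 0-based form of [pi(n+1)]. *)
Definition ext_max (s : seq nat) : seq nat := rcons s (size s).

Lemma join132_nil a : join132 a [::] = ext_max a.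
Proof. by rewrite /join132 addn0 cats1 map_id_in // => x; rewrite addn0. Qed.

Lemma ascents_ext_max2 s : ascents (ext_max (ext_max s)) = rcons (ascents (ext_max s)) true.
Proof. by rewrite {1}/ext_max ascents_rcons size_rcons ltnSn. Qed.

Lemma last_ascents_ext_max (s : seq nat) :
  {in s, forall x, x < size s} -> last false (ascents (ext_max s)) = ~~ nilp s.
Proof.
case/lastP: s => [//|s x] lt_s.
by rewrite /ext_max ascents_rcons last_rcons lt_s ?mem_rcons ?mem_head ?/nilp ?size_rcons.
Qed.

Lemma ascents_ext_max_join a (b : seq nat) : {in b, forall y, y < size b} -> b != [::] ->
  ascents (ext_max (join132 a b)) = ascents (ext_max a) ++ false :: ascents (ext_max b).
Proof.
case: b => // y t lt_b _.
rewrite /ext_max size_join132 /join132 rcons_cat !rcons_cons -cat_rcons ascents_cat.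
have -> : (size a + size (y :: t) < y) = false by have := lt_b y (mem_head _ _) => /= ?; lia.
rewrite -map_rcons ascents_shift.
congr (_ ++ _ :: _); rewrite -!rcons_cons.
by apply: ascents_rcons_above => z /lt_b //; lia.
Qed.

Lemma nilp_tree_word r : nilp (tree_word (Node r)) = nilp r.
Proof. by rewrite /nilp (size_perm_word (is_perm_word_tree _)); case: r. Qed.

Lemma tree_word_leaves t :
  young_leaves t = double_trues (ascents (ext_max (tree_word t))) /\
  old_leaves t = true_runs true (ascents (ext_max (tree_word t))).
Proof.
elim/ptree_rcons_ind: t => [//|r c [IHy IHo] [IHcy IHco]].
have lt_tree t := perm_word_lt_size (is_perm_word_tree t).
rewrite young_leaves_rcons old_leaves_rcons tree_word_rcons.
case: c IHcy IHco => -[|c1 cs] IHcy IHco.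
  rewrite join132_nil ascents_ext_max2 double_trues_rcons true_runs_rcons [~~ true]/=.
  by rewrite last_ascents_ext_max // nilp_tree_word negbK -IHy -IHo !addn0.
have nonempty : tree_word (Node (c1 :: cs)) != [::].
  by apply/eqP => /(congr1 (@nilp _)); rewrite nilp_tree_word.
rewrite ascents_ext_max_join // double_trues_cat true_runs_cat.
by rewrite -IHy -IHo -IHcy -IHco /= !addn0.
Qed.

Definition perm_seq n (p : {perm 'I_n}) : seq nat := [seq val (p i) | i <- enum 'I_n].

Lemma size_perm_seq n (p : {perm 'I_n}) : size (perm_seq p) = n.
Proof. by rewrite size_map size_enum_ord. Qed.

Lemma nth_perm_seq n (p : {perm 'I_n}) (i : 'I_n) : nth 0 (perm_seq p) i = p i.
Proof. by rewrite (nth_map i) ?size_enum_ord // nth_ord_enum. Qed.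

Lemma is_perm_word_perm_seq n (p : {perm 'I_n}) : is_perm_word n (perm_seq p).
Proof.
apply: is_perm_wordP; rewrite ?size_perm_seq //.
  by rewrite /perm_seq map_inj_uniq ?enum_uniq // => i j /val_inj /perm_inj.
by move=> x /mapP [i _ ->]; apply: ltn_ord.
Qed.

Lemma perm_seq_inj n : injective (@perm_seq n).
Proof.
by move=> p q eq_pq; apply/permP => i; apply/val_inj; rewrite /= -!nth_perm_seq eq_pq.
Qed.

Lemma perm_seq_surj n s : is_perm_word n.+1 s -> exists p : {perm 'I_n.+1}, perm_seq p = s.
Proof.
move=> s_perm; have size_s := size_perm_word s_perm.
have lt_s i : i < n.+1 -> nth 0 s i < n.+1.
  by move=> lt_i; rewrite -(mem_perm_word s_perm) mem_nth // size_s.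
pose f (i : 'I_n.+1) : 'I_n.+1 := inord (nth 0 s i).
have f_inj : injective f.
  move=> i j /(congr1 val); rewrite /f /= !inordK ?lt_s // => /eqP.
  by rewrite nth_uniq ?size_s ?(perm_word_uniq s_perm) // => /eqP /val_inj.
exists (perm f_inj); apply: (@eq_from_nth _ 0); rewrite size_perm_seq ?size_s // => i lt_i.
by rewrite -[i]/(nat_of_ord (Ordinal lt_i)) nth_perm_seq permE /f /= inordK ?lt_s.
Qed.

Lemma avoids132_perm_seq n (p : {perm 'I_n}) : avoids132 p <-> avoids132_word (perm_seq p).
Proof.
split=> [p_av i j l ltij ltjl | p_av [a [b [c [ltab ltbc lt_ac lt_cb]]]]].
  rewrite size_perm_seq => ltl; apply/negP => /andP [lt_il lt_lj].
  have [lt_i lt_j] : i < n /\ j < n by lia.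
  apply: p_av; exists (Ordinal lt_i), (Ordinal lt_j), (Ordinal ltl).
  by rewrite -!nth_perm_seq.
have := p_av a b c ltab ltbc; rewrite size_perm_seq ltn_ord !nth_perm_seq.
by rewrite lt_ac lt_cb => /(_ isT).
Qed.

Lemma word_extE n (p : {perm 'I_n}) : word_ext p = map (addn^~ 1) (ext_max (perm_seq p)).
Proof.
rewrite /word_ext /ext_max size_perm_seq map_rcons addn1 cats1 /perm_seq -[in RHS]map_comp.
by congr rcons; apply: eq_map => i /=; rewrite addn1.
Qed.

Theorem mainTheorem13 (n : nat) (hn : 0 < n) :
  exists psi : ptree -> {perm 'I_n},
    [/\ (forall T, edges T = n -> avoids132 (psi T)),
        (forall T1 T2, edges T1 = n -> edges T2 = n -> psi T1 = psi T2 -> T1 = T2),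
        (forall p : {perm 'I_n}, avoids132 p -> exists T, edges T = n /\ psi T = p)
      & (forall T, edges T = n ->
           young_leaves T = double_ascents (word_ext (psi T)) /\
           old_leaves T = ascending_runs (word_ext (psi T)))].
Proof.
case: n hn => // n _.
pose psi t := odflt 1%g [pick p : {perm 'I_n.+1} | perm_seq p == tree_word t].
have psiE t : edges t = n.+1 -> perm_seq (psi t) = tree_word t.
  move=> edges_t; rewrite /psi; case: pickP => [p /eqP // | no_perm].
  have := is_perm_word_tree t; rewrite edges_t => /perm_seq_surj [p eq_p].
  by have := no_perm p; rewrite eq_p eqxx.
exists psi; split.
- by move=> t /psiE eq_t; apply/avoids132_perm_seq; rewrite eq_t; exact: avoids132_tree_word.
- by move=> t1 t2 /psiE eq1 /psiE eq2 eq12; apply: tree_word_inj; rewrite -eq1 -eq2 eq12.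
- move=> p /avoids132_perm_seq p_av.
  have [t [edges_t tree_t]] := tree_word_surj (is_perm_word_perm_seq p) p_av.
  by exists t; split=> //; apply: perm_seq_inj; rewrite psiE.
- move=> t /psiE eq_t.
  rewrite word_extE double_ascentsE ascending_runsE ascents_shift eq_t.
  exact: tree_word_leaves.
Qed.
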